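(* Let $q$ be a power of $2$ and $n=q^2+1$. For an integer $a$ with $1\le a\le n-1$, $a\in\mathrm{MinRep}_n$ if and only if $a\in[l(q+1)+1,(l+1)(q-1)]$ for some integer $l$ with $0\le l\le\frac q2-1$. Moreover, $|C_a|=4$ for every nonzero $a\in\mathrm{MinRep}_n$.
   Context: For $0\le s\le n-1$, $C_s=\{sq^i\bmod n:i\ge0\}$ is the $q$-cyclotomic coset of $s$ modulo $n$; its least element is its coset leader; $\mathrm{MinRep}_n$ is the set of all coset leaders modulo $n$. $[u,v]$ denotes the set of integers $u,u+1,\dots,v$. *)

From mathcomp Require Import all_boot.
Set Implicit Arguments. Unset Strict Implicit. Unset Printing Implicit Defensive.

(* q-cyclotomic coset of s modulo n, as a finite set of residues in 'I_n.
   The exponent i ranges over 0..n-1, which covers every i >= 0 since the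
   sequence s*q^i mod n takes at most n values. *)
Definition cyc_coset (q n s : nat) : {set 'I_n} :=
  [set j : 'I_n | [exists i : 'I_n, (j : nat) == (s * q ^ i) %% n]].

Definition is_coset_leader (q n s : nat) : bool :=
  (s < n) && [forall j : 'I_n, (j \in cyc_coset q n s) ==> (s <= j)].

From mathcomp Require Import all_boot zify.

Set Implicit Arguments.
Unset Strict Implicit.
Unset Printing Implicit Defensive.

(* Since q^2 = -1 modulo n = q^2 + 1, the coset of 0 < a < n is {a, c, n - a, n - c} with
   c = a q mod n.  For q even, n is odd and coprime to q - 1 and q + 1, so c <> a and
   c <> n - a: the coset has four elements.  Writing a = u q + v with v < q, one has
   c = v q - u when v > 0 (and c = n - u when v = 0), and a is the least of the four
   residues exactly when u < v and u + v < q, i.e. when a lies in the interval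
   [u (q + 1) + 1, (u + 1) (q - 1)]. *)

Lemma card_ord_mem_seq n (s : seq nat) :
  uniq s -> all (fun x => x < n) s -> #|[set j : 'I_n | (j : nat) \in s]| = size s.
Proof.
move=> s_uniq s_lt.
have -> : [set j : 'I_n | (j : nat) \in s] = [set j in pmap insub s].
  by apply/setP=> j; rewrite !inE mem_pmap_sub.
rewrite cardsE (card_uniqP (pmap_sub_uniq _ s_uniq)) size_pmap_sub.
by move: s_lt; rewrite all_count => /eqP.
Qed.

Lemma coprime_ndvdn_mul N d a : coprime N d -> 0 < a < N -> ~~ (N %| a * d).
Proof.
move=> co_Nd /andP[a_gt0 a_lt].
by rewrite Gauss_dvdl //; apply/negP => /(dvdn_leq a_gt0); rewrite leqNgt a_lt.
Qed.

Section CosetsModSquarePlusOne.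

Variable q : nat.
Hypothesis q_ge2 : 2 <= q.

Local Notation n := (q * q + 1).

Lemma modn_mul_sqr x : 0 < x < n -> x * q ^ 2 %% n = n - x.
Proof.
move=> x_bounds; rewrite (_ : x * q ^ 2 = x.-1 * n + (n - x)) ?modnMDl ?modn_small //.
  by lia.
by rewrite -mulnn; case: x x_bounds => //= x; nia.
Qed.

Lemma expq4_mod : q ^ 4 %% n = 1.
Proof.
have sqr_mod : q ^ 2 %% n = n - 1 by rewrite -[q ^ 2]mul1n modn_mul_sqr //; nia.
rewrite (expnD q 2 2) -modnMml sqr_mod modn_mul_sqr; nia.
Qed.

Lemma mul_expq_mod a i : a * q ^ i %% n = a * q ^ (i %% 4) %% n.
Proof.
rewrite {1}(divn_eq i 4) expnD mulnCA -modnMml [i %/ 4 * 4]mulnC expnM -modnXm expq4_mod.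
by rewrite exp1n modnMml mul1n.
Qed.

Definition cyc_orbit a := [seq a * q ^ i %% n | i <- iota 0 4].

Lemma mem_cyc_coset a (j : 'I_n) : (j \in cyc_coset q n a) = ((j : nat) \in cyc_orbit a).
Proof.
rewrite inE; apply/existsP/mapP => [[i /eqP ->]|[i]].
  by exists (i %% 4); [rewrite mem_iota ltn_mod | apply: mul_expq_mod].
rewrite mem_iota => /andP[_ i_lt4] ->.
have i_lt : i < n by nia.
by exists (Ordinal i_lt).
Qed.

Lemma is_coset_leader_orbit a :
  a < n -> is_coset_leader q n a = all (fun x => a <= x) (cyc_orbit a).
Proof.
move=> a_lt; rewrite /is_coset_leader a_lt; apply/forallP/allP => [leader x|a_min j].
  case/mapP=> i i_in ->; have x_lt : a * q ^ i %% n < n by rewrite ltn_mod addn1.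
  by have /implyP := leader (Ordinal x_lt); rewrite mem_cyc_coset; apply; apply/mapP; exists i.
by apply/implyP; rewrite mem_cyc_coset => /a_min.
Qed.

Lemma coprime_sqr_succ_q : coprime n q.
Proof. by rewrite coprime_sym /coprime gcdnMDl gcdn1. Qed.

Lemma coprime_sqr_succ_odd d : odd d -> d %| (q - 1) * (q + 1) -> coprime n d.
Proof.
move=> d_odd /dvdnP[k sqr_pred]; rewrite coprime_sym /coprime.
have -> : n = k * d + 2 by rewrite -sqr_pred; nia.
by rewrite gcdnMDl -/(coprime d 2) coprimen2.
Qed.

Lemma mulq_mod_gt0 a : 0 < a < n -> 0 < a * q %% n.
Proof.
by move=> a_bounds; rewrite lt0n; apply: coprime_ndvdn_mul coprime_sqr_succ_q a_bounds.
Qed.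

Lemma cyc_orbitE a :
  0 < a < n -> cyc_orbit a = [:: a; a * q %% n; n - a; n - a * q %% n].
Proof.
move=> a_bounds; have c_bounds : 0 < a * q %% n < n by rewrite mulq_mod_gt0 // ltn_mod addn1.
rewrite /cyc_orbit /= expn0 muln1 modn_small; last by case/andP: a_bounds.
by rewrite expn1 modn_mul_sqr // expnS mulnA -(modnMml (a * q)) modn_mul_sqr.
Qed.

Lemma is_coset_leaderE a : 0 < a < n ->
  is_coset_leader q n a = [&& a <= a * q %% n, a <= n - a & a <= n - a * q %% n].
Proof.
by move=> a_bounds; rewrite is_coset_leader_orbit ?cyc_orbitE //= ?leqnn ?andbT //; lia.
Qed.

Hypothesis q_even : ~~ odd q.

Lemma coprime_sqr_succ_pred : coprime n (q - 1).
Proof.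
apply: coprime_sqr_succ_odd; last exact: dvdn_mulr.
by rewrite oddB ?(negbTE q_even) 1?ltnW.
Qed.

Lemma coprime_sqr_succ_succ : coprime n (q + 1).
Proof.
by apply: coprime_sqr_succ_odd; [rewrite addn1 /= q_even | exact: dvdn_mull].
Qed.

Lemma mulq_mod_neq a : 0 < a < n -> a * q %% n != a.
Proof.
move=> a_bounds.
apply: (contraNneq _ (coprime_ndvdn_mul coprime_sqr_succ_pred a_bounds)) => c_eq.
rewrite mulnBr muln1 -eqn_mod_dvd; last by nia.
by rewrite c_eq modn_small //; case/andP: a_bounds.
Qed.

Lemma addn_mulq_mod_neq a : 0 < a < n -> a + a * q %% n != n.
Proof.
move=> a_bounds.
apply: (contraNneq _ (coprime_ndvdn_mul coprime_sqr_succ_succ a_bounds)) => sum_n.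
by rewrite /dvdn mulnDr muln1 addnC -modnDmr sum_n modnn.
Qed.

Lemma uniq_cyc_orbit a : 0 < a < n -> uniq (cyc_orbit a).
Proof.
move=> a_bounds; rewrite cyc_orbitE //= !inE andbT.
have := mulq_mod_neq a_bounds; have := addn_mulq_mod_neq a_bounds.
have := mulq_mod_gt0 a_bounds; have : a * q %% n < n by rewrite ltn_mod addn1.
have : odd n by rewrite oddD oddM (negbTE q_even).
lia.
Qed.

Lemma card_cyc_coset a : 0 < a < n -> #|cyc_coset q n a| = 4.
Proof.
move=> a_bounds.
have -> : cyc_coset q n a = [set j : 'I_n | (j : nat) \in cyc_orbit a].
  by apply/setP=> j; rewrite mem_cyc_coset in_set.
rewrite card_ord_mem_seq ?size_map ?size_iota ?uniq_cyc_orbit //.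
by apply/allP=> _ /mapP[i _ ->]; rewrite ltn_mod addn1.
Qed.

Lemma mulq_mod_digits u v : 0 < v < q -> u <= q -> (u * q + v) * q %% n = v * q - u.
Proof.
move=> v_bounds u_le; have q_le : q <= v * q by rewrite leq_pmull; case/andP: v_bounds.
have v_mul_lt : v * q < q * q by rewrite ltn_mul2r; lia.
rewrite (_ : (u * q + v) * q = u * n + (v * q - u)) ?modnMDl ?modn_small //; nia.
Qed.

Lemma coset_leader_ineqs_digits u v : 0 < v < q -> u * q + v < n ->
  [&& u * q + v <= v * q - u, u * q + v <= n - (u * q + v)
    & u * q + v <= n - (v * q - u)] = (u < v) && (u + v < q).
Proof.
move=> /andP[v_gt0 v_lt] a_lt.
apply/and3P/andP => [[a_le_c _ a_le_nc]|[u_lt_v sum_lt]].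
  have u_lt_v : u < v.
    rewrite ltnNge; apply/negP => v_le_u.
    have : v * q <= u * q by rewrite leq_mul2r v_le_u orbT.
    lia.
  split => //; rewrite ltnNge; apply/negP => q_le_sum.
  have : q * q <= (u + v) * q by rewrite leq_mul2r q_le_sum orbT.
  (* The two inequalities then force v = u + 1 and q = 2 u + 1, contradicting q even. *)
  nia.
have : u.+1 * q <= v * q by rewrite leq_mul2r u_lt_v orbT.
have : (u.+1 * 2) * q <= q * q by rewrite leq_mul2r; lia.
have : (u + v).+1 * q <= q * q by rewrite leq_mul2r sum_lt orbT.
by split; lia.
Qed.

Lemma is_coset_leader_digits a : 0 < a < n ->
  is_coset_leader q n a = (a %/ q < a %% q) && (a %/ q + a %% q < q).
Proof.
move=> a_bounds; rewrite is_coset_leaderE //.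
have a_eq := divn_eq a q; set u := a %/ q in a_eq *; set v := a %% q in a_eq *.
have v_lt : v < q by rewrite ltn_mod; lia.
have u_le : u <= q by nia.
have [v0|v_gt0] := posnP v.
  have u_bounds : 0 < u < n by nia.
  rewrite v0 ltn0 a_eq v0 addn0 -mulnA mulnn modn_mul_sqr //.
  nia.
by rewrite a_eq mulq_mod_digits ?coset_leader_ineqs_digits ?v_gt0 -?a_eq; case/andP: a_bounds.
Qed.

End CosetsModSquarePlusOne.

Lemma interval_digitsP q a : 0 < q ->
  (exists l, l <= q %/ 2 - 1 /\ l * (q + 1) + 1 <= a <= (l + 1) * (q - 1)) <->
  (a %/ q < a %% q) && (a %/ q + a %% q < q).
Proof.
move=> q_gt0; split => [[l [_ /andP[a_ge a_le]]]|/andP[u_lt_v sum_lt]].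
  set r := a - l * q; have a_eq : a = l * q + r by rewrite /r; nia.
  have r_lt : r < q by rewrite /r; nia.
  rewrite a_eq divnMDl // modnMDl divn_small // modn_small // addn0.
  nia.
exists (a %/ q); split; first by lia.
have a_eq := divn_eq a q.
nia.
Qed.

Theorem lemma8 (m : nat) (hm : 1 <= m) :
  let q := 2 ^ m in
  let n := q ^ 2 + 1 in
  (forall a : nat, 1 <= a <= n - 1 ->
     (is_coset_leader q n a <->
      exists l : nat, l <= q %/ 2 - 1 /\ l * (q + 1) + 1 <= a <= (l + 1) * (q - 1)))
  /\ (forall a : nat, 0 < a -> is_coset_leader q n a -> #|cyc_coset q n a| = 4).
Proof.
case: m hm => [|k] // _ q n.
have q_ge2 : 2 <= q by rewrite /q expnS leq_pmulr ?expn_gt0.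
have q_even : ~~ odd q by rewrite /q expnS oddM.
have -> : n = q * q + 1 by rewrite /n mulnn.
split => [a a_bounds|a a_gt0 /andP[a_lt _]].
  by rewrite is_coset_leader_digits ?interval_digitsP //; lia.
by rewrite card_cyc_coset ?a_gt0.
Qed.
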